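(* For every mechanism $x_i$ for agent $i$ satisfying (P) and (IC), with indirect utility $U_i(s_i)=\mathbb E[\omega x_i(s_i,s_{-i})\mid s_i]$ on $[\underline s,\overline s]$, $$\mathbb E[x_i(s)]=-\int_{\underline s}^{\overline s}\Big\{3(1-2s_i)f(s_i)+2s_i(1-s_i)f'(s_i)\Big\}U_i(s_i)\,ds_i+2\overline s(1-\overline s)f(\overline s)U_i(\overline s)-2\underline s(1-\underline s)f(\underline s)U_i(\underline s).$$
   Context: Setup. A state $\omega\in\{-1,+1\}$ is drawn with probability $1/2$ each. There are $n\ge2$ agents. Conditional on $\omega$, signals $s_1,\dots,s_n$ are i.i.d. with distribution $\mathbb F_\omega$ on $[0,1]$, normalized so that $s_i=\mathbb P[\omega=+1\mid s_i]$; $\mathbb F_{-1},\mathbb F_{+1}$ mutually absolutely continuous with densities; $\mathbb F=(\mathbb F_{-1}+\mathbb F_{+1})/2$ has density $f$ supported on the interval $[\underline s,\overline s]\subset[0,1]$, $\underline s<\overline s$, $f$ differentiable there with continuous derivative $f'$ and $|f'/f|$ bounded. The expectation $\mathbb E[x_i(s)]$ is with respect to the (unconditional) joint distribution of $s$. A mechanism for agent $i$ is measurable $x_i:[\underline s,\overline s]^n\to[0,1]$ (probability of receiving a good worth $\omega$, else $0$). (P): $\mathbb E[\omega x_i(s_i,s_{-i})\mid s_i]\ge0$; (IC): $\mathbb E[\omega x_i(s_i,s_{-i})\mid s_i]\ge\mathbb E[\omega x_i(\hat s_i,s_{-i})\mid s_i]$, for all $s_i,\hat s_i\in[\underline s,\overline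 s]$. *)

From HB Require Import structures.
From mathcomp Require Import all_boot all_order all_algebra.
From mathcomp Require Import all_classical all_reals all_analysis.
Set Implicit Arguments. Unset Strict Implicit. Unset Printing Implicit Defensive.
Import Order.TTheory GRing.Theory Num.Theory.
Import numFieldNormedType.Exports.
Local Open Scope classical_set_scope.
Local Open Scope ring_scope.

Section Defs.
Variable R : realType.

Fixpoint iint (w : R -> R) (m : nat) : (m.-tuple R -> R) -> R :=
  match m return (m.-tuple R -> R) -> R with
  | 0 => fun g => g [tuple]
  | m'.+1 => fun g =>
      Rintegral lebesgue_measure setT
        (fun t => w t * iint w (fun u : m'.-tuple R => g (cons_tuple t u)))
  end.

(* E[ x(si, s_{-i}) | omega ] where, conditional on omega, the n-1 other
   signals are i.i.d. with density w = density of F_omega. *)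
Definition cond_mech (w : R -> R) (m : nat) (x : R -> m.-tuple R -> R) (si : R) : R :=
  iint w (x si).

(* E[ omega x(shat, s_{-i}) | s_i = s ] by Bayes' rule with prior 1/2 on each
   state: P[omega = +1 | s_i = s] = (1/2 fp s) / (1/2 fp s + 1/2 fm s), and
   s_{-i} independent of s_i given omega. *)
Definition interim_util (fp fm : R -> R) (m : nat) (x : R -> m.-tuple R -> R)
    (s shat : R) : R :=
  (2^-1 * fp s * cond_mech fp x shat - 2^-1 * fm s * cond_mech fm x shat)
  / (2^-1 * fp s + 2^-1 * fm s).

Definition indirect_util (fp fm : R -> R) (m : nat) (x : R -> m.-tuple R -> R)
    (s : R) : R := interim_util fp fm x s s.

(* unconditional E[ x_i(s) ] : omega = +-1 w.p. 1/2, then all n signals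
   i.i.d. with density of F_omega. *)
Definition exp_alloc (fp fm : R -> R) (m : nat) (x : R -> m.-tuple R -> R) : R :=
  2^-1 * Rintegral lebesgue_measure setT (fun si => fp si * cond_mech fp x si)
  + 2^-1 * Rintegral lebesgue_measure setT (fun si => fm si * cond_mech fm x si).

End Defs.

(* On the support of the signal, Bayes' rule writes the interim utility of
   reporting t as s A(t) - (1 - s) B(t), where A and B are the allocation
   probabilities conditional on omega = +1 and omega = -1.  Incentive
   compatibility then says that phi = A + B is a subgradient of the indirect
   utility U, and E[x] = \int f ((2s - 1) U + 2s(1 - s) phi).  Integrating
   h phi by parts, with h = 2s(1 - s) f and U' = phi, gives the formula.
   As U need not be differentiable, the integration by parts is done by hand:
   E(t) = h(t) U(t) - \int_a^t (h' U + h phi) has increments bounded by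
   K (t - s)^2 + C (t - s) (phi t - phi s), which forces E to be constant
   because phi is nondecreasing. *)

From HB Require Import structures.
From mathcomp Require Import all_boot all_order all_algebra.
From mathcomp Require Import all_classical all_reals all_analysis.
From mathcomp Require Import ring lra measurable_realfun.
Import Order.TTheory GRing.Theory Num.Theory.
Import numFieldNormedType.Exports.
Local Open Scope classical_set_scope.
Local Open Scope ring_scope.

Section increment_bound.
Context {R : realType}.
Variables (E phi : R -> R) (a b K C : R).
Hypotheses (ab : a <= b) (K_ge0 : 0 <= K) (C_ge0 : 0 <= C).
Hypothesis increment_le : forall s t, a <= s -> s <= t -> t <= b ->
  `|E t - E s| <= K * (t - s) ^+ 2 + C * (t - s) * (phi t - phi s).

(* Cut [a, b] into N equal pieces: the quadratic terms add up to
   K (b - a)^2 / N and the phi-terms telescope. *)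
Lemma increment_le_div (N : nat) : (0 < N)%N ->
  `|E b - E a| <= (K * (b - a) ^+ 2 + C * (b - a) * (phi b - phi a)) / N%:R.
Proof.
move=> N_gt0; have N_gt0' : (0 : R) < N%:R by rewrite ltr0n.
set d := (b - a) / N%:R.
have d_ge0 : 0 <= d by rewrite divr_ge0 // ?subr_ge0 // ltW.
pose t (k : nat) := a + k%:R * d.
have tN : t N = b by rewrite /t /d mulrC divfK ?gt_eqF // addrC subrK.
have t0 : t 0%N = a by rewrite /t mul0r addr0.
have tS k : t k.+1 - t k = d by rewrite /t -natr1 mulrDl mul1r; lra.
have t_ge k : a <= t k by rewrite /t lerDl mulr_ge0.
have t_le k : (k <= N)%N -> t k <= b.
  by move=> kN; rewrite -tN /t lerD2l ler_wpM2r // ler_nat.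
have -> : E b - E a = \sum_(0 <= k < N) (E (t k.+1) - E (t k)).
  by rewrite telescope_sumr // tN t0.
apply: le_trans (ler_norm_sum _ _ _) _.
apply: (@le_trans _ _
  (\sum_(0 <= k < N) (K * d ^+ 2 + C * d * (phi (t k.+1) - phi (t k))))).
  rewrite !big_mkord; apply: ler_sum => k _.
  rewrite -(tS k); apply: increment_le => //; last exact: t_le.
  by rewrite -subr_ge0 tS.
rewrite big_split /= -[X in _ + X <= _]mulr_sumr.
rewrite (telescope_sumr (fun k => phi (t k))) // tN t0.
rewrite big_mkord sumr_const card_ord /d le_eqVlt; apply/orP; left.
by apply/eqP; field; lra.
Qed.

Lemma eq_of_increment_le : E b = E a.
Proof.
set X := K * (b - a) ^+ 2 + C * (b - a) * (phi b - phi a).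
have X_ge0 : 0 <= X.
  exact: le_trans (normr_ge0 _) (@increment_le a b (lexx a) ab (lexx b)).
apply/eqP; rewrite -subr_eq0 -normr_eq0; apply/eqP/le_anti.
rewrite normr_ge0 andbT leNgt; apply/negP => e_gt0.
set e := `|E b - E a| in e_gt0.
have Xe_ge0 : 0 <= X / e by rewrite divr_ge0 // ltW.
have ltXN := archi_boundP Xe_ge0.
set N := Num.Def.archi_bound (X / e) in ltXN.
have N_gt0 : (0 < N)%N by rewrite -(ltr0n R); apply: le_lt_trans ltXN.
have := @increment_le_div N N_gt0; rewrite -/X -/e ler_pdivlMr ?ltr0n // => eN_le.
by move: ltXN; rewrite ltr_pdivrMr // mulrC ltNge eN_le.
Qed.

End increment_bound.

Section bounded_measurable.
Context {R : realType}.
Notation mu := (@lebesgue_measure R).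
Variables a b : R.

Definition bounded_measurable_on (g : R -> R) :=
  measurable_fun `[a, b] g /\ exists M : R, forall x, x \in `[a, b] -> `|g x| <= M.

Lemma bounded_measurable_cst c : bounded_measurable_on (fun _ => c).
Proof. by split; [exact: measurable_cst | exists `|c|]. Qed.

Lemma bounded_measurableD g1 g2 : bounded_measurable_on g1 ->
  bounded_measurable_on g2 -> bounded_measurable_on (fun x => g1 x + g2 x).
Proof.
move=> [m1 [M1 h1]] [m2 [M2 h2]]; split; first exact: measurable_funD.
exists (M1 + M2) => x xab; apply: le_trans (ler_normD _ _) _.
by apply: lerD; [exact: h1 | exact: h2].
Qed.

Lemma bounded_measurableN g :
  bounded_measurable_on g -> bounded_measurable_on (fun x => - g x).
Proof.
move=> [m [M h]]; split; first exact: measurableT_comp.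
by exists M => x xab; rewrite normrN; exact: h.
Qed.

Lemma bounded_measurableB g1 g2 : bounded_measurable_on g1 ->
  bounded_measurable_on g2 -> bounded_measurable_on (fun x => g1 x - g2 x).
Proof. by move=> ? ?; apply: bounded_measurableD => //; exact: bounded_measurableN. Qed.

Lemma bounded_measurableM g1 g2 : bounded_measurable_on g1 ->
  bounded_measurable_on g2 -> bounded_measurable_on (fun x => g1 x * g2 x).
Proof.
move=> [m1 [M1 h1]] [m2 [M2 h2]]; split; first exact: measurable_funM.
exists (M1 * M2) => x xab; rewrite normrM.
by apply: ler_pM => //; [exact: h1 | exact: h2].
Qed.

Lemma bounded_measurable_norm g :
  bounded_measurable_on g -> bounded_measurable_on (fun x => `|g x|).
Proof.
move=> [m [M h]]; split; first exact: measurableT_comp.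
by exists M => x xab; rewrite normr_id; exact: h.
Qed.

Lemma continuous_bounded_measurable g : a <= b ->
  {within `[a, b], continuous g} -> bounded_measurable_on g.
Proof.
move=> ab gc; split; first exact: subspace_continuous_measurable_fun.
have [c1 _ gc1] := EVT_max ab gc; have [c2 _ gc2] := EVT_min ab gc.
exists (`|g c1| + `|g c2|) => x xab.
have := gc1 _ xab; have := gc2 _ xab; rewrite ler_norml.
have := ler_norm (g c1); have := ler_norm (- g c2); rewrite normrN.
have := normr_ge0 (g c1); have := normr_ge0 (g c2).
by move=> *; apply/andP; split; lra.
Qed.

Lemma bounded_measurable_integrable g (S : set R) : bounded_measurable_on g ->
  measurable S -> S `<=` `[a, b] -> mu.-integrable S (EFin \o g).
Proof.
move=> [mg [M hM]] mS Sab; apply/integrableP; split.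
  by apply/measurable_EFinP; exact: measurable_funS mg.
apply: (@le_lt_trans _ _ (\int[mu]_(x in `[a, b]) `|(EFin \o g) x|)%E).
  apply: ge0_subset_integral => //.
  by apply: measurableT_comp => //; apply/measurable_EFinP.
apply: le_lt_trans.
  apply: (integral_le_bound (`|M|)%:E) => //; first exact/measurable_EFinP.
  by apply: aeW => x xab /=; rewrite lee_fin (le_trans (hM x _)) ?ler_norm.
have ab_fin : (mu `[a, b] < +oo)%E.
  by rewrite lebesgue_measure_itv; case: ifP => _ //; rewrite -EFinB ltry.
by rewrite lte_mul_pinfty.
Qed.

Lemma bounded_measurable_integrable_itv g :
  bounded_measurable_on g -> mu.-integrable `[a, b] (EFin \o g).
Proof. by move=> bg; apply: bounded_measurable_integrable. Qed.

(* Clamping to [a, b] extends g to a nondecreasing function on all of R. *)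
Lemma nondecreasing_on_measurable (g : R -> R) : a <= b ->
  (forall s t, a <= s -> s <= t -> t <= b -> g s <= g t) ->
  measurable_fun `[a, b] g.
Proof.
move=> ab g_nd; pose clamp x := Num.max a (Num.min x b).
apply: (eq_measurable_fun (g \o clamp)).
  move=> x; rewrite inE /= in_itv /= => /andP[ax xb].
  by rewrite /= /clamp (min_idPl xb) (max_idPr ax).
apply: nondecreasing_measurable => // x y xy; apply: g_nd.
- by rewrite /clamp le_max lexx.
- by rewrite le_max2 // le_min2.
- by rewrite /clamp ge_max ab ge_min lexx orbT.
Qed.

End bounded_measurable.
Arguments bounded_measurable_cst {R a b}.
Arguments bounded_measurableD {R a b g1 g2}.
Arguments bounded_measurableN {R a b g}.
Arguments bounded_measurableB {R a b g1 g2}.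
Arguments bounded_measurableM {R a b g1 g2}.
Arguments bounded_measurable_norm {R a b g}.
Arguments continuous_bounded_measurable {R a b g}.
Arguments bounded_measurable_integrable {R a b g S}.
Arguments bounded_measurable_integrable_itv {R a b g}.
Arguments nondecreasing_on_measurable {R a b g}.

Ltac bounded_measurable :=
  repeat first [ assumption | exact: bounded_measurable_cst
               | apply: bounded_measurableD | apply: bounded_measurableN
               | apply: bounded_measurableM ].

Section real_analysis.
Context {R : realType}.
Notation mu := (@lebesgue_measure R).

Lemma within_continuousM (A : set R) (p g : R -> R) :
  {within A, continuous p} -> {within A, continuous g} ->
  {within A, continuous (fun t => p t * g t)}.
Proof. by move=> pc gc x; apply: cvgM; [exact: pc | exact: gc]. Qed.

Lemma norm_increment_le_of_derive (h dh : R -> R) (a b M : R) :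
  (forall s, s \in `]a, b[ -> is_derive s 1 h (dh s)) ->
  {within `[a, b], continuous h} ->
  (forall x, a <= x -> x <= b -> `|dh x| <= M) ->
  forall s t, a <= s -> s <= t -> t <= b -> `|h t - h s| <= M * (t - s).
Proof.
move=> hd hc dh_le s t ass st tb.
have hd' x : x \in `]s, t[ -> is_derive x 1 h (dh x).
  rewrite !in_itv /= => /andP[sx xt]; apply: hd.
  by rewrite in_itv /= (le_lt_trans ass sx) (lt_le_trans xt tb).
have hc' : {within `[s, t], continuous h}.
  by apply: continuous_subspaceW hc; apply: subset_itv; rewrite bnd_simp.
have [c] := MVT_segment st hd' hc'; rewrite in_itv /= => /andP[sc ct] ->.
rewrite normrM (@ger0_norm _ (t - s)) ?subr_ge0 // ler_wpM2r ?subr_ge0 //.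
by apply: dh_le; [exact: le_trans sc | exact: le_trans tb].
Qed.

Lemma Rintegral_itv_sub (g : R -> R) (a s t : R) : a <= s -> s <= t ->
  mu.-integrable `[a, t] (EFin \o g) ->
  \int[mu]_(x in `[a, t]) g x - \int[mu]_(x in `[a, s]) g x =
  \int[mu]_(x in `[s, t]) g x.
Proof.
move=> a_le_s st ig.
rewrite (@Rintegral_itvB R g (BLeft a) (BRight t) s ig) ?bnd_simp //.
rewrite Rintegral_itv_obnd_cbnd //.
by apply: integrableS ig => //; apply: subset_itv; rewrite bnd_simp.
Qed.

Lemma Rintegral_cst_itv (c s t : R) : s <= t ->
  \int[mu]_(x in `[s, t]) c = c * (t - s).
Proof.
move=> st; rewrite Rintegral_cst //= lebesgue_measure_itv /=.
case: ifP => [_ //|/negbT]; rewrite -leNgt lee_fin => ts.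
by rewrite (@le_anti _ _ t s) ?ts ?st // subrr mulr0.
Qed.

Lemma Rintegral_itv_derive (h dh : R -> R) (s t : R) : s < t ->
  {within `[s, t], continuous h} ->
  (forall x, x \in `]s, t[ -> is_derive x 1 h (dh x)) ->
  {within `[s, t], continuous dh} ->
  \int[mu]_(x in `[s, t]) dh x = h t - h s.
Proof.
move=> st hc hd dhc.
have dF : derivable_oo_LRcontinuous h s t.
  have [_ hl hr] := (continuous_within_itvP h st).1 hc.
  by split => // x xst; case: (hd x xst).
have F' : {in `]s, t[, h^`()%classic =1 dh}.
  by move=> x xst; rewrite derive1E; case: (hd x xst).
by rewrite /Rintegral (continuous_FTC2 st dhc dF F').
Qed.

End real_analysis.
Arguments norm_increment_le_of_derive {R h dh a b M}.
Arguments Rintegral_itv_sub {R g a s t}.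
Arguments Rintegral_itv_derive {R h dh s t}.

Section subgradient.
Context {R : realType}.
Notation mu := (@lebesgue_measure R).
Variables (a b : R) (U phi : R -> R).
Hypothesis ab : a <= b.
Hypothesis subgradient : forall s t, s \in `[a, b] -> t \in `[a, b] ->
  (t - s) * phi s <= U t - U s.

Local Notation L := (`|phi a| + `|phi b|).

Let in_ab {s : R} : a <= s -> s <= b -> s \in `[a, b].
Proof. by move=> ? ?; rewrite in_itv /=; apply/andP. Qed.

Lemma subgradient_sandwich {s t : R} : a <= s -> s <= t -> t <= b ->
  (t - s) * phi s <= U t - U s <= (t - s) * phi t.
Proof.
move=> ass st tb; apply/andP; split.
  by apply: subgradient; apply: in_ab => //; lra.
have := subgradient _ _ (in_ab (le_trans ass st) tb) (in_ab ass (le_trans st tb)).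
lra.
Qed.

Lemma subgradient_nondecreasing {s t : R} : a <= s -> s <= t -> t <= b ->
  phi s <= phi t.
Proof.
move=> ass st tb; have /andP[h1 h2] := subgradient_sandwich ass st tb.
have [-> //|sneqt] := eqVneq s t.
have st_gt0 : 0 < t - s by rewrite subr_gt0 lt_neqAle sneqt st.
by rewrite -subr_ge0 -(pmulr_rge0 _ st_gt0); lra.
Qed.

Lemma subgradient_norm_le {x : R} : a <= x -> x <= b -> `|phi x| <= L.
Proof.
move=> ax xb; rewrite ler_norml.
have := subgradient_nondecreasing (lexx a) ax xb.
have := subgradient_nondecreasing ax xb (lexx b).
have := ler_norm (phi b); have := ler_norm (- phi a); rewrite normrN.
have := normr_ge0 (phi a); have := normr_ge0 (phi b).
by move=> *; apply/andP; split; lra.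
Qed.

Lemma subgradient_lipschitz {s t : R} : a <= s -> s <= t -> t <= b ->
  `|U t - U s| <= L * (t - s).
Proof.
move=> ass st tb; have /andP[h1 h2] := subgradient_sandwich ass st tb.
have := subgradient_norm_le ass (le_trans st tb).
have := subgradient_norm_le (le_trans ass st) tb.
by rewrite !ler_norml => /andP[? ?] /andP[? ?]; apply/andP; split; nra.
Qed.

Lemma bounded_measurable_subgradient : bounded_measurable_on a b phi.
Proof.
split.
  apply: nondecreasing_on_measurable => // s t.
  exact: subgradient_nondecreasing.
by exists L => x; rewrite in_itv /= => /andP[? ?]; exact: subgradient_norm_le.
Qed.

(* U + L x is nondecreasing, since U has slopes at least -L. *)
Lemma bounded_measurable_potential : bounded_measurable_on a b U.
Proof.
split.
  have mUL : measurable_fun `[a, b] (fun x => U x + L * x).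
    apply: nondecreasing_on_measurable => // s t ass st tb.
    have /andP[h1 _] := subgradient_sandwich ass st tb.
    have := subgradient_norm_le ass (le_trans st tb).
    by rewrite ler_norml => /andP[? ?]; nra.
  have mL : measurable_fun `[a, b] (fun x => L * x).
    exact: measurable_funM.
  apply: (eq_measurable_fun (fun x => (U x + L * x) - L * x)).
    by move=> x _; rewrite addrK.
  exact: measurable_funB.
exists (`|U a| + L * (b - a)) => x; rewrite in_itv /= => /andP[ax xb].
have := subgradient_lipschitz (lexx a) ax xb.
have := ler_normD (U a) (U x - U a); rewrite addrC subrK.
have : L * (x - a) <= L * (b - a) by rewrite ler_wpM2l ?lerB.
lra.
Qed.

Let integrable_on {g : R -> R} {s t : R} : bounded_measurable_on a b g ->
  a <= s -> t <= b -> mu.-integrable `[s, t] (EFin \o g).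
Proof.
move=> bg ass tb; apply: bounded_measurable_integrable bg _ _ => //.
by apply: subset_itv; rewrite bnd_simp.
Qed.

Lemma potential_increment_Rintegral_le {s t : R} : a <= s -> s <= t -> t <= b ->
  `|U t - U s - \int[mu]_(x in `[s, t]) phi x| <= (t - s) * (phi t - phi s).
Proof.
move=> ass st tb; have /andP[h1 h2] := subgradient_sandwich ass st tb.
have iphi := integrable_on bounded_measurable_subgradient ass tb.
have icst c := integrable_on (bounded_measurable_cst c) ass tb.
have P1 : (t - s) * phi s <= \int[mu]_(x in `[s, t]) phi x.
  rewrite mulrC -Rintegral_cst_itv //; apply: le_Rintegral => // x.
  rewrite /= in_itv /= => /andP[sx xt].
  by apply: subgradient_nondecreasing => //; exact: le_trans tb.
have P2 : \int[mu]_(x in `[s, t]) phi x <= (t - s) * phi t.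
  rewrite mulrC -Rintegral_cst_itv //; apply: le_Rintegral => // x.
  rewrite /= in_itv /= => /andP[sx xt].
  by apply: subgradient_nondecreasing => //; exact: le_trans sx.
by rewrite ler_norml; apply/andP; split; lra.
Qed.

Variables (h dh : R -> R).
Hypotheses (hc : {within `[a, b], continuous h})
  (hd : forall s, s \in `]a, b[ -> is_derive s 1 h (dh s))
  (dhc : {within `[a, b], continuous dh}).

Let bounded_measurable_h := continuous_bounded_measurable ab hc.
Let bounded_measurable_dh := continuous_bounded_measurable ab dhc.

(* On [s, t], freezing U at t and h at s in the integrand costs O((t - s)^2). *)
Lemma Rintegral_by_parts_step (M1 : R) {s t : R} :
  0 <= M1 -> (forall x, a <= x -> x <= b -> `|dh x| <= M1) ->
  a <= s -> s < t -> t <= b ->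
  `|\int[mu]_(x in `[s, t]) (dh x * U x + h x * phi x) -
    ((h t - h s) * U t + h s * \int[mu]_(x in `[s, t]) phi x)|
  <= M1 * L * (t - s) ^+ 2.
Proof.
move=> M1_ge0 dh_le ass st tb; have st' := ltW st.
have bU := bounded_measurable_potential.
have bphi := bounded_measurable_subgradient.
pose q x := dh x * U t + h s * phi x.
have -> : (h t - h s) * U t + h s * \int[mu]_(x in `[s, t]) phi x =
    \int[mu]_(x in `[s, t]) q x.
  have hd' x : x \in `]s, t[ -> is_derive x 1 h (dh x).
    rewrite !in_itv /= => /andP[sx xt]; apply: hd.
    by rewrite in_itv /= (le_lt_trans ass sx) (lt_le_trans xt tb).
  have sub : `[s, t] `<=` `[a, b] by apply: subset_itv; rewrite bnd_simp.
  rewrite /q RintegralD //; try by apply: integrable_on => //; bounded_measurable.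
  rewrite RintegralZr ?RintegralZl ?(integrable_on _ ass tb) //.
  by rewrite (Rintegral_itv_derive st) //; apply: continuous_subspaceW sub _.
have gq_le x : x \in `[s, t] ->
    `|dh x * U x + h x * phi x - q x| <= M1 * L * (t - s).
  rewrite in_itv /= => /andP[sx xt].
  have ax := le_trans ass sx; have xb := le_trans xt tb.
  have -> : dh x * U x + h x * phi x - q x =
      dh x * (U x - U t) + (h x - h s) * phi x by rewrite /q; ring.
  apply: le_trans (ler_normD _ _) _; rewrite !normrM.
  have -> : M1 * L * (t - s) = M1 * (L * (t - x)) + M1 * (x - s) * L by ring.
  apply: lerD; apply: ler_pM => //; rewrite ?dh_le ?subgradient_norm_le //.
  - by rewrite distrC subgradient_lipschitz.
  - exact: norm_increment_le_of_derive hd hc dh_le _ _ ass sx xb.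
rewrite -RintegralB //; try by apply: integrable_on => //; bounded_measurable.
apply: le_trans (le_normr_Rintegral _ _) _ => //.
  by apply: integrable_on => //; rewrite /q; bounded_measurable.
rewrite expr2 mulrA -Rintegral_cst_itv //; apply: le_Rintegral => //.
- apply: integrable_on => //; apply: bounded_measurable_norm.
  by rewrite /q; bounded_measurable.
- by apply: integrable_on => //; exact: bounded_measurable_cst.
Qed.

Lemma Rintegral_subgradient_by_parts :
  \int[mu]_(x in `[a, b]) (dh x * U x + h x * phi x) = h b * U b - h a * U a.
Proof.
have [_ [M0 h_le]] := bounded_measurable_h.
have [_ [M1 dh_le]] := bounded_measurable_dh.
have {}h_le x : a <= x -> x <= b -> `|h x| <= `|M0|.
  by move=> ax xb; rewrite (le_trans (h_le x (in_ab ax xb))) ?ler_norm.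
have {}dh_le x : a <= x -> x <= b -> `|dh x| <= `|M1|.
  by move=> ax xb; rewrite (le_trans (dh_le x (in_ab ax xb))) ?ler_norm.
have bU := bounded_measurable_potential.
have bphi := bounded_measurable_subgradient.
have bg : bounded_measurable_on a b (fun x => dh x * U x + h x * phi x).
  by bounded_measurable.
pose E t := h t * U t - \int[mu]_(x in `[a, t]) (dh x * U x + h x * phi x).
suff : E b = E a by rewrite /E set_itv1 Rintegral_set1 subr0; lra.
apply: (@eq_of_increment_le _ E phi a b (`|M1| * L) `|M0|) => // s t ass st tb.
have [<-|sneqt] := eqVneq s t.
  by rewrite !subrr normr0 expr2 !(mulr0, mul0r) addr0.
have st' : s < t by rewrite lt_neqAle sneqt st.
have -> : E t - E s =
    h s * (U t - U s - \int[mu]_(x in `[s, t]) phi x) -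
    (\int[mu]_(x in `[s, t]) (dh x * U x + h x * phi x) -
      ((h t - h s) * U t + h s * \int[mu]_(x in `[s, t]) phi x)).
  rewrite /E -(Rintegral_itv_sub ass st (integrable_on bg (lexx a) tb)); ring.
apply: le_trans (ler_normB _ _) _; rewrite normrM addrC.
apply: lerD; first exact: Rintegral_by_parts_step.
rewrite -mulrA; apply: ler_pM => //; first exact: h_le (le_trans st tb).
exact: potential_increment_Rintegral_le.
Qed.

End subgradient.
Arguments bounded_measurable_potential {R a b U phi}.
Arguments bounded_measurable_subgradient {R a b U phi}.
Arguments Rintegral_subgradient_by_parts {R a b U phi} _ _ {h dh}.

Lemma posterior_densitiesE (R : realFieldType) (p m s : R) :
  0 < p + m -> p / (p + m) = s ->
  p = 2 * s * ((p + m) / 2) /\ m = 2 * (1 - s) * ((p + m) / 2).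
Proof.
move=> pm_gt0 <-; have pm_neq0 : p + m != 0 by rewrite gt_eqF.
by split; field.
Qed.
Arguments posterior_densitiesE {R p m s}.

Lemma posterior_weighted_diffE (R : realFieldType) (p m s u v : R) :
  0 < p + m -> p / (p + m) = s ->
  (2^-1 * p * u - 2^-1 * m * v) / (2^-1 * p + 2^-1 * m) = s * u - (1 - s) * v.
Proof.
move=> pm_gt0 <-; have pm_neq0 : p + m != 0 by rewrite gt_eqF.
by field.
Qed.

Lemma is_derive_quadratic_mul (R : realType) (f : R -> R) (s df : R) :
  is_derive s 1 f df ->
  is_derive s 1 (fun t => 2 * t * (1 - t) * f t)
    (2 * (1 - 2 * s) * f s + 2 * s * (1 - s) * df).
Proof.
move=> fd.
have d1 : is_derive s 1 (fun t : R => 2 * t) 2.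
  have D := is_deriveZ 2 (is_derive_id s (1 : R)).
  by apply: is_derive_eq D _; rewrite /GRing.scale /= mulr1.
have d2 : is_derive s 1 (fun t : R => 1 - t) (-1).
  have D := is_deriveB (is_derive_cst (1 : R) s 1) (is_derive_id s (1 : R)).
  by apply: is_derive_eq D _; rewrite sub0r.
have D := is_deriveM (is_deriveM d1 d2) fd; apply: is_derive_eq D _.
rewrite /GRing.scale /=; change (2 * s * (1 - s) * df + f s * (2 * s * -1 + (1 - s) * 2) =
  2 * (1 - 2 * s) * f s + 2 * s * (1 - s) * df); ring.
Qed.

Lemma Rintegral_setT_itv (R : realType) (g k : R -> R) (a b : R) :
  (forall s, s \notin `[a, b] -> g s = 0) -> {in `[a, b], g =1 k} ->
  \int[lebesgue_measure]_(s in setT) g s = \int[lebesgue_measure]_(s in `[a, b]) k s.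
Proof.
move=> g_out g_in; rewrite [RHS]Rintegral_mkcond; apply: eq_Rintegral => s _.
rewrite patchE; case: ifPn => [/set_mem|/negP sI]; first exact: g_in.
by rewrite g_out //; apply/negP => /mem_set.
Qed.
Arguments Rintegral_setT_itv {R g} k a b.

Section allocation_by_parts.
Context {R : realType}.
Notation mu := (@lebesgue_measure R).
Variables (a b : R) (U phi f df : R -> R).
Hypothesis ab : a <= b.
Hypothesis subgradient : forall s t, s \in `[a, b] -> t \in `[a, b] ->
  (t - s) * phi s <= U t - U s.
Hypotheses (fc : {within `[a, b], continuous f})
  (fd : forall s, s \in `]a, b[ -> is_derive s 1 f (df s))
  (dfc : {within `[a, b], continuous df}).

Let continuous_quadratic : continuous (fun t : R => 2 * t * (1 - t)).
Proof.
move=> t; apply: cvgM; first by apply: cvgM; [exact: cvg_cst | exact: cvg_id].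
by apply: cvgB; [exact: cvg_cst | exact: cvg_id].
Qed.

Let continuous_affine : continuous (fun t : R => 2 * (1 - 2 * t)).
Proof.
move=> t; apply: cvgM; first exact: cvg_cst.
by apply: cvgB; [exact: cvg_cst | apply: cvgM; [exact: cvg_cst | exact: cvg_id]].
Qed.

(* The two integrands are f_{+1} A and f_{-1} B, written through the indirect
   utility U and phi = A + B: A = U + (1 - s) phi and B = s phi - U. *)
Lemma allocation_integral_by_parts :
  2^-1 * \int[mu]_(s in `[a, b]) (2 * s * f s * (U s + (1 - s) * phi s)) +
  2^-1 * \int[mu]_(s in `[a, b]) (2 * (1 - s) * f s * (s * phi s - U s)) =
  - Rintegral mu `[a, b]
      (fun s => (3 * (1 - 2 * s) * f s + 2 * s * (1 - s) * df s) * U s)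
  + 2 * b * (1 - b) * f b * U b - 2 * a * (1 - a) * f a * U a.
Proof.
pose h t := 2 * t * (1 - t) * f t.
pose dh t := 2 * (1 - 2 * t) * f t + 2 * t * (1 - t) * df t.
have hc : {within `[a, b], continuous h}.
  exact: within_continuousM (continuous_subspaceT continuous_quadratic) fc.
have hd s : s \in `]a, b[ -> is_derive s 1 h (dh s).
  by move=> sI; apply: is_derive_quadratic_mul; exact: fd.
have dhc : {within `[a, b], continuous dh}.
  apply: within_continuousD.
    exact: within_continuousM (continuous_subspaceT continuous_affine) fc.
  exact: within_continuousM (continuous_subspaceT continuous_quadratic) dfc.
have bU := bounded_measurable_potential ab subgradient.
have bphi := bounded_measurable_subgradient ab subgradient.
have bf := continuous_bounded_measurable ab fc.
have bdf := continuous_bounded_measurable ab dfc.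
have bid : bounded_measurable_on a b (fun t => t).
  apply: continuous_bounded_measurable ab _.
  by apply: continuous_subspaceT => z; exact: cvg_id.
rewrite -mulrDr -RintegralD // -?RintegralZl //;
  try by apply: bounded_measurable_integrable_itv; bounded_measurable.
transitivity (h b * U b - h a * U a - Rintegral mu `[a, b]
  (fun s => (3 * (1 - 2 * s) * f s + 2 * s * (1 - s) * df s) * U s));
  last by rewrite /h; ring.
rewrite -(Rintegral_subgradient_by_parts ab subgradient hc hd dhc) -RintegralB //;
  try by apply: bounded_measurable_integrable_itv; bounded_measurable.
by apply: eq_Rintegral => s _; rewrite /dh /h; field.
Qed.

End allocation_by_parts.
Arguments allocation_integral_by_parts {R a b U phi f df}.

Theorem lemmaA4 (R : realType) (n : nat) (sl sh : R)
  (fp fm df : R -> R) (x : R -> (n.-1).-tuple R -> R) :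
  (2 <= n)%N ->
  (* signal support [sl, sh] inside [0, 1], nondegenerate *)
  0 <= sl -> sl < sh -> sh <= 1 ->
  (* fp, fm : densities of F_{+1}, F_{-1}, vanishing outside [sl, sh] *)
  measurable_fun setT fp -> measurable_fun setT fm ->
  (forall s, 0 <= fp s) -> (forall s, 0 <= fm s) ->
  (forall s, s \notin `[sl, sh] -> fp s = 0 /\ fm s = 0) ->
  (\int[lebesgue_measure]_(s in setT) (fp s)%:E = 1)%E ->
  (\int[lebesgue_measure]_(s in setT) (fm s)%:E = 1)%E ->
  (* F_{-1}, F_{+1} mutually absolutely continuous *)
  (forall A : set R, measurable A ->
     (\int[lebesgue_measure]_(s in A) (fp s)%:E = 0)%E <->
     (\int[lebesgue_measure]_(s in A) (fm s)%:E = 0)%E) ->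
  (* f = (fp + fm)/2 is positive on its support [sl, sh] *)
  (forall s, s \in `[sl, sh] -> 0 < (fp s + fm s) / 2) ->
  (* normalization: s = P[omega = +1 | s] *)
  (forall s, s \in `[sl, sh] -> fp s / (fp s + fm s) = s) ->
  (* f differentiable on [sl, sh] with continuous derivative df, |f'/f| bounded *)
  {within `[sl, sh], continuous (fun s => (fp s + fm s) / 2)} ->
  (forall s, s \in `]sl, sh[ -> is_derive s 1 (fun t => (fp t + fm t) / 2) (df s)) ->
  {within `[sl, sh], continuous df} ->
  (exists M : R, forall s, s \in `[sl, sh] -> `|df s / ((fp s + fm s) / 2)| <= M) ->
  (* x : a measurable mechanism for agent i, x(s_i, s_{-i}) in [0,1] *)
  measurable_fun setT (fun p : R * (n.-1).-tuple R => x p.1 p.2) ->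
  (forall si (t : (n.-1).-tuple R), 0 <= x si t <= 1) ->
  (* (P) *)
  (forall s, s \in `[sl, sh] -> 0 <= indirect_util fp fm x s) ->
  (* (IC) *)
  (forall s shat, s \in `[sl, sh] -> shat \in `[sl, sh] ->
     interim_util fp fm x s shat <= indirect_util fp fm x s) ->
  let f := fun s => (fp s + fm s) / 2 in
  let U := indirect_util fp fm x in
  exp_alloc fp fm x =
    - Rintegral lebesgue_measure `[sl, sh]
        (fun s => (3 * (1 - 2 * s) * f s + 2 * s * (1 - s) * df s) * U s)
    + 2 * sh * (1 - sh) * f sh * U sh
    - 2 * sl * (1 - sl) * f sl * U sl.
Proof.
move=> _ _ slsh _ _ _ _ _ out _ _ _ f_gt0 posterior fc fd dfc _ _ _ _ IC f U.
have fpm_gt0 s : s \in `[sl, sh] -> 0 < fp s + fm s.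
  by move=> sI; have := f_gt0 s sI; lra.
have densitiesE s : s \in `[sl, sh] ->
    fp s = 2 * s * f s /\ fm s = 2 * (1 - s) * f s.
  by move=> sI; exact: posterior_densitiesE (fpm_gt0 s sI) (posterior s sI).
pose A := cond_mech fp x; pose B := cond_mech fm x; pose phi t := A t + B t.
have interimE s t : s \in `[sl, sh] ->
    interim_util fp fm x s t = s * A t - (1 - s) * B t.
  by move=> sI; apply: posterior_weighted_diffE; [exact: fpm_gt0 | exact: posterior].
have UE s : s \in `[sl, sh] -> U s = s * A s - (1 - s) * B s.
  exact: interimE.
have subgradient s t : s \in `[sl, sh] -> t \in `[sl, sh] ->
    (t - s) * phi s <= U t - U s.
  move=> sI tI; have := IC t s tI sI; rewrite interimE // -/(U t) (UE s sI).
  by rewrite /phi; lra.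
rewrite /exp_alloc -/A -/B.
rewrite (Rintegral_setT_itv (fun s => 2 * s * f s * (U s + (1 - s) * phi s)) sl sh);
  last 2 first.
- by move=> s /out[-> _]; rewrite mul0r.
- by move=> s sI; rewrite (densitiesE s sI).1 UE // /phi; ring.
rewrite (Rintegral_setT_itv (fun s => 2 * (1 - s) * f s * (s * phi s - U s)) sl sh);
  last 2 first.
- by move=> s /out[_ ->]; rewrite mul0r.
- by move=> s sI; rewrite (densitiesE s sI).2 UE // /phi; ring.
exact: allocation_integral_by_parts (ltW slsh) subgradient fc fd dfc.
Qed.
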